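(* Let $k$ be an algebraically closed field, let $A$ be a local Noetherian $k$-algebra with maximal ideal $\mathfrak{m}$ and residue field $k$, and let $M$ be a finitely generated $A$-module. Then the equalities $$\dim_k (M \otimes_A A/I_n) = n \,\dim_k (M \otimes_A k)$$ hold for all integers $n > 0$ and all ideals $I_n \subset A$ of colength $n$ if and only if the equalities $$\dim_k (M \otimes_A A/\mathfrak{m}^n) = \dim_k (A/\mathfrak{m}^n)\cdot \dim_k (M \otimes_A k)$$ hold for all integers $n > 0$.
   Context: An ideal $I \subset A$ is said to be of colength $n$ if $A/I$ is an Artinian $k$-algebra with $\dim_k A/I = n$. *)

From HB Require Import structures.
From mathcomp Require Import all_boot all_order all_algebra.
Set Implicit Arguments. Unset Strict Implicit. Unset Printing Implicit Defensive.
Import GRing.Theory.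
Local Open Scope ring_scope.

Section CommAlg.
Variables (k : fieldType) (A : comAlgType k).

Definition is_ideal (I : A -> Prop) : Prop :=
  [/\ I 0, (forall x y, I x -> I y -> I (x + y)) & (forall a x, I x -> I (a * x))].

Definition is_proper_ideal (I : A -> Prop) : Prop := is_ideal I /\ ~ I 1.

Definition is_maximal_ideal (m : A -> Prop) : Prop :=
  is_proper_ideal m /\
  forall J : A -> Prop, is_proper_ideal J -> (forall x, m x -> J x) ->
    forall x, J x -> m x.

Definition ideal_gen (s : seq A) : A -> Prop :=
  fun a => exists t : seq (A * A),
    (forall p, p \in t -> p.2 \in s) /\ a = \sum_(p <- t) p.1 * p.2.

Definition noetherian_ring : Prop :=
  forall I : A -> Prop, is_ideal I ->
    exists s : seq A, forall a, I a <-> ideal_gen s a.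

(* A is local with maximal ideal m and residue field k
   (the composite k -> A -> A/m is onto) *)
Definition local_residue_k (m : A -> Prop) : Prop :=
  [/\ is_maximal_ideal m,
      (forall J : A -> Prop, is_proper_ideal J -> forall x, J x -> m x)
    & (forall a : A, exists c : k, m (a - c%:A))].

Definition ideal_mul (I J : A -> Prop) : A -> Prop :=
  fun a => exists t : seq (A * A),
    (forall p, p \in t -> I p.1 /\ J p.2) /\ a = \sum_(p <- t) p.1 * p.2.

Fixpoint ideal_pow (m : A -> Prop) (n : nat) : A -> Prop :=
  match n with
  | 0 => fun _ => True
  | n'.+1 => ideal_mul (ideal_pow m n') m
  end.

(* dim_k (V / N) = d, for V a k-vector space given by the scaling sc *)
Definition quot_dim (V : zmodType) (sc : k -> V -> V) (N : V -> Prop) (d : nat)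
  : Prop :=
  exists v : 'I_d -> V,
    (forall c : 'I_d -> k, N (\sum_(i < d) sc (c i) (v i)) -> forall i, c i = 0)
    /\ (forall x : V, exists c : 'I_d -> k, N (x - \sum_(i < d) sc (c i) (v i))).

Definition ring_quot_dim (I : A -> Prop) (d : nat) : Prop :=
  quot_dim (fun (c : k) (a : A) => c *: a) I d.

Definition colength (I : A -> Prop) (n : nat) : Prop :=
  is_ideal I /\ ring_quot_dim I n.

Section Modules.
Variable M : lmodType A.

Definition mod_finitely_generated : Prop :=
  exists s : seq M, forall x : M, exists t : seq (A * M),
    (forall p, p \in t -> p.2 \in s) /\ x = \sum_(p <- t) p.1 *: p.2.

Definition submod_mul (I : A -> Prop) : M -> Prop :=
  fun x => exists t : seq (A * M),
    (forall p, p \in t -> I p.1) /\ x = \sum_(p <- t) p.1 *: p.2.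

(* dim_k (M (x)_A A/I) = dim_k (M / I M) = d *)
Definition tensor_quot_dim (I : A -> Prop) (d : nat) : Prop :=
  quot_dim (fun (c : k) (x : M) => c%:A *: x) (submod_mul I) d.

End Modules.
End CommAlg.

From HB Require Import structures.
From mathcomp Require Import all_boot all_order all_algebra ring.
From Stdlib Require Import Classical IndefiniteDescription.
Set Implicit Arguments. Unset Strict Implicit. Unset Printing Implicit Defensive.
Import GRing.Theory.
Local Open Scope ring_scope.

(* The forward implication is immediate: every [m^n] has finite colength
   [e = dim A/m^n] (if [e = 0] then [m^n M = M]).  Conversely, let [I] have
   colength [n].  Choosing [z_i] in [m^i] but not in [I + m^(i+1)] for [i <= n]
   would give [n + 1] elements independent modulo [I]; hence [m^j ⊆ I + m^(j+1)]
   for some [j], and Nakayama's lemma (determinant trick) gives [m^j ⊆ I].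
   A basis [x_1 .. x_d] of [M/mM] generates [M] modulo every [m^j M], so with a
   basis [u_1 .. u_e] of [A/m^j] the [e d] products [u_b x_i] span [M/m^j M];
   as that space has dimension [e d], they form a basis, i.e. [M/m^j M] is free
   over [A/m^j] on the [x_i].  Freeness descends to [A/I] for [I ⊇ m^j], so
   [dim M/IM = n d]. *)

(** * Linear algebra modulo a subspace *)

Section SubspaceQuotient.
Variables (k : fieldType) (V : lmodType k).

Definition is_subspace (N : V -> Prop) : Prop :=
  [/\ N 0, forall x y, N x -> N y -> N (x + y) & forall (c : k) x, N x -> N (c *: x)].

Definition indep_mod (N : V -> Prop) n (v : 'I_n -> V) : Prop :=
  forall c : 'I_n -> k, N (\sum_i c i *: v i) -> forall i, c i = 0.

Definition spans_mod (N : V -> Prop) n (v : 'I_n -> V) : Prop :=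
  forall x, exists c : 'I_n -> k, N (x - \sum_i c i *: v i).

Section Subspace.
Variables (N : V -> Prop) (subN : is_subspace N).

Lemma subspace0 : N 0. Proof. by case: subN. Qed.
Lemma subspaceD x y : N x -> N y -> N (x + y). Proof. by case: subN => _ h _; apply: h. Qed.
Lemma subspaceZ (c : k) x : N x -> N (c *: x). Proof. by case: subN => _ _; apply. Qed.
Lemma subspaceN x : N x -> N (- x). Proof. by rewrite -scaleN1r; apply: subspaceZ. Qed.
Lemma subspaceB x y : N x -> N y -> N (x - y).
Proof. by move=> hx hy; apply: subspaceD => //; apply: subspaceN. Qed.
Lemma subspace_sum (I : Type) (r : seq I) (P : pred I) (F : I -> V) :
  (forall i, P i -> N (F i)) -> N (\sum_(i <- r | P i) F i).
Proof. by move=> h; apply: big_ind => //; [exact: subspace0 | exact: subspaceD]. Qed.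

End Subspace.

Variables (N : V -> Prop) (subN : is_subspace N).

Lemma spans_mod_coefmx p q (y : 'I_p -> V) (w : 'I_q -> V) : spans_mod N w ->
  exists P : 'M[k]_(p, q), forall i, N (y i - \sum_j P i j *: w j).
Proof.
move=> sw; have [f hf] := functional_choice _ (fun i => sw (y i)).
by exists (\matrix_(i, j) f i j) => i; under eq_bigr do rewrite mxE.
Qed.

Lemma indep_mod_card_le p q (w : 'I_q -> V) (y : 'I_p -> V) :
  spans_mod N w -> indep_mod N y -> (p <= q)%N.
Proof.
move=> sw iy; rewrite leqNgt; apply/negP => ltqp.
have [P hP] := spans_mod_coefmx y sw.
have /rowV0Pn [c /sub_kermxP cP0 nz_c] : kermx P != 0.
  by rewrite kermx_eq0 /row_free; apply: contraTneq ltqp => <-; rewrite -leqNgt rank_leq_col.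
have Nc : N (\sum_i c 0 i *: y i).
  have cPw : \sum_i c 0 i *: \sum_j P i j *: w j = \sum_j (c *m P) 0 j *: w j.
    under [RHS]eq_bigr do rewrite mxE scaler_suml.
    rewrite exchange_big; apply: eq_bigr => i _; rewrite scaler_sumr.
    by apply: eq_bigr => j _; rewrite scalerA.
  suff -> : \sum_i c 0 i *: y i = \sum_i c 0 i *: (y i - \sum_j P i j *: w j).
    by apply: (subspace_sum subN) => i _; apply: (subspaceZ subN).
  under [RHS]eq_bigr do rewrite scalerBr.
  by rewrite sumrB cPw cP0 [X in _ - X]big1 ?subr0 // => j _; rewrite mxE scale0r.
case/eqP: nz_c; apply/rowP => j; rewrite mxE; exact: iy Nc j.
Qed.

Lemma spans_mod_drop p (y : 'I_p.+1 -> V) : spans_mod N y -> ~ indep_mod N y ->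
  exists i, spans_mod N (fun j => y (lift i j)).
Proof.
move=> sy niy.
have [c [Nc [i ci]]] : exists c, N (\sum_i c i *: y i) /\ exists i, c i <> 0.
  apply: NNPP => hn; apply: niy => c Nc i; apply: NNPP => ci.
  by apply: hn; exists c; split => //; exists i.
exists i => x; have [a ha] := sy x.
exists (fun j => a (lift i j) - a i / c i * c (lift i j)).
have := subspaceD subN ha (subspaceZ subN (a i / c i) Nc); congr N.
rewrite (bigD1_ord i) //= (bigD1_ord i (P := xpredT)) //= scalerDr scalerA.
rewrite divfK; last exact/eqP.
under [in RHS]eq_bigr do rewrite scalerBl -scalerA.
rewrite sumrB -scaler_sumr opprD opprB -addrA.
by congr (_ + _); rewrite addrC addrACA subrr add0r.
Qed.

Lemma indep_mod_of_spans_mod q (w y : 'I_q -> V) :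
  indep_mod N w -> spans_mod N y -> indep_mod N y.
Proof.
case: q w y => [|q] w y iw sy; first by move=> c _ [].
apply: NNPP => niy; have [i sy'] := spans_mod_drop sy niy.
by have := indep_mod_card_le sy' iw; rewrite ltnn.
Qed.

Lemma basis_mod_exists p (y : 'I_p -> V) : spans_mod N y ->
  exists d (v : 'I_d -> V), indep_mod N v /\ spans_mod N v.
Proof.
elim: p y => [|p IH] y sy; first by exists 0%N, y; split => // c _ [].
have [iy|niy] := classic (indep_mod N y); first by exists p.+1, y.
by have [i sy'] := spans_mod_drop sy niy; apply: IH sy'.
Qed.

Lemma spans_mod_cat (N' : V -> Prop) p q (f : 'I_p -> V) (g : 'I_q -> V) :
  spans_mod N' f -> (forall x, N' x -> exists c : 'I_q -> k, N (x - \sum_j c j *: g j)) ->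
  spans_mod N (fun i => match split i with inl a => f a | inr b => g b end).
Proof.
move=> sf sg x; have [a ha] := sf x; have [b hb] := sg _ ha.
exists (fun i => match split i with inl i' => a i' | inr j => b j end).
have splitl (i : 'I_p) : split (lshift q i) = inl i by apply: (unsplitK (inl i)).
have splitr (j : 'I_q) : split (rshift p j) = inr j by apply: (unsplitK (inr j)).
rewrite big_split_ord /= (eq_bigr (fun i => a i *: f i)) => [|i _]; last by rewrite splitl.
rewrite (eq_bigr (fun j => b j *: g j)) => [|j _]; last by rewrite splitr.
by rewrite opprD addrA.
Qed.

Lemma indep_mod_filtration (F : nat -> V -> Prop) p (z : 'I_p -> V) :
  (forall i, is_subspace (F i)) -> (forall i j x, (i <= j)%N -> F j x -> F i x) ->
  (forall i : 'I_p, F i (z i) /\ ~ exists2 y, F i.+1 y & N (z i - y)) ->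
  indep_mod N z.
Proof.
move=> subF leF hz c Nc.
suff c0 t : forall i : 'I_p, (i < t)%N -> c i = 0 by move=> i; apply: (c0 i.+1).
elim: t => [|t IH] i //; rewrite ltnS => le_it; apply: NNPP => ci.
case: (hz i) => _; apply.
(* [c i] is the first nonzero coefficient, so modulo [N] the vector [z i] is a
   combination of the later [z l], which lie in [F i.+1]. *)
exists (- (c i)^-1 *: \sum_(l | l != i) c l *: z l).
  apply: (subspaceZ (subF _)).
  apply: (subspace_sum (subF _)) => l nli.
  have [lt_li|le_il] := ltnP l i.
    by rewrite (IH l (leq_trans lt_li le_it)) scale0r; apply: subspace0.
  apply: (subspaceZ (subF _)); apply: (leF _ l); last by case: (hz l).
  by rewrite ltn_neqAle le_il andbT; move: nli; apply: contra => /eqP/val_inj ->.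
have nz_ci : c i != 0 by apply/eqP.
rewrite scaleNr opprK -[z i]scale1r -(mulVf nz_ci) -scalerA -scalerDr.
by apply: (subspaceZ subN); move: Nc; rewrite (bigD1 i).
Qed.

End SubspaceQuotient.

(** * Ideals, local rings and Nakayama's lemma *)

Section Ideals.
Variables (k : fieldType) (A : comAlgType k).

Section Ideal.
Variables (I : A -> Prop) (hI : is_ideal I).

Lemma ideal0 : I 0. Proof. by case: hI. Qed.
Lemma idealD x y : I x -> I y -> I (x + y). Proof. by case: hI => _ h _; apply: h. Qed.
Lemma idealMl a x : I x -> I (a * x). Proof. by case: hI => _ _; apply. Qed.
Lemma idealMr a x : I x -> I (x * a). Proof. by rewrite mulrC; apply: idealMl. Qed.

Lemma ideal_subspace : is_subspace I.
Proof.
by split=> [|x y|c x]; [exact: ideal0 | exact: idealD | rewrite -mulr_algl; exact: idealMl].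
Qed.

End Ideal.

Lemma ideal_mul_ideal (I J : A -> Prop) : is_ideal I -> is_ideal (ideal_mul I J).
Proof.
move=> hI; split=> [|x y|a x].
- by exists [::]; rewrite big_nil.
- move=> [t1 [h1 ->]] [t2 [h2 ->]]; exists (t1 ++ t2); rewrite big_cat; split => // p.
  by rewrite mem_cat => /orP[]; [apply: h1 | apply: h2].
- move=> [t [h ->]]; exists [seq (a * p.1, p.2) | p <- t]; split.
    by move=> _ /mapP[p pt ->]; have [h1 h2] := h p pt; split => //; apply: idealMl.
  by rewrite big_map mulr_sumr; apply: eq_bigr => p _; rewrite mulrA.
Qed.

Lemma ideal_mul_mem (I J : A -> Prop) a b : I a -> J b -> ideal_mul I J (a * b).
Proof. by move=> Ia Jb; exists [:: (a, b)]; rewrite big_seq1; split => // p /[!inE] /eqP ->. Qed.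

Lemma ideal_mul_subl (I J : A -> Prop) x : is_ideal I -> ideal_mul I J x -> I x.
Proof.
move=> hI [t [h ->]]; rewrite big_seq; apply: (subspace_sum (ideal_subspace hI)) => p pt.
by apply: idealMr; case: (h p pt).
Qed.

Lemma ideal_pow_ideal (m : A -> Prop) j : is_ideal (ideal_pow m j).
Proof. by elim: j => [|j IH] //=; apply: ideal_mul_ideal. Qed.

Lemma ideal_pow_le (m : A -> Prop) i j x : (i <= j)%N -> ideal_pow m j x -> ideal_pow m i x.
Proof.
move/subnK <-; elim: (j - i)%N x => [|d IH] x //= /ideal_mul_subl mx.
exact/IH/mx/ideal_pow_ideal.
Qed.

Lemma ideal_gen_nth (s : seq A) (l : 'I_(size s)) : ideal_gen s s`_l.
Proof.
by exists [:: (1, s`_l)]; rewrite big_seq1 mul1r; split => // p /[!inE] /eqP -> /=; apply: mem_nth.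
Qed.

Lemma ideal_genP (s : seq A) a :
  ideal_gen s a -> exists g : 'I_(size s) -> A, a = \sum_l g l * s`_l.
Proof.
case=> t [ht ->]; elim: t ht => [|p t IH] ht.
  by exists (fun _ => 0); rewrite big_nil big1 // => l _; rewrite mul0r.
have [q tq|g IHg] := IH; first by apply: ht; rewrite inE tq orbT.
have ps : (index p.2 s < size s)%N by rewrite index_mem ht ?mem_head.
exists (fun l => (if l == Ordinal ps then p.1 else 0) + g l).
under [RHS]eq_bigr do rewrite mulrDl; rewrite big_cons IHg big_split /=; congr (_ + _).
rewrite (bigD1 (Ordinal ps)) //= eqxx nth_index ?ht ?mem_head // big1 ?addr0 // => l.
by move/negbTE ->; rewrite mul0r.
Qed.

Lemma ideal_mul_gen (J K : A -> Prop) (s : seq A) y : is_ideal K ->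
  (forall a, J a -> ideal_gen s a) -> ideal_mul J K y ->
  exists c : 'I_(size s) -> A, (forall l, K (c l)) /\ y = \sum_l c l * s`_l.
Proof.
move=> hK genJ [t [ht ->]]; elim: t ht => [|q t IH] ht.
  exists (fun _ => 0); split=> [l|]; first exact: ideal0.
  by rewrite big_nil big1 // => l _; rewrite mul0r.
have [Jq Kq] := ht q (mem_head _ _).
have [p tp|c [Kc IHc]] := IH; first by apply: ht; rewrite inE tp orbT.
have [g qg] := ideal_genP (genJ _ Jq).
exists (fun l => g l * q.2 + c l); split=> [l|]; first by apply: idealD => //; apply: idealMl.
rewrite big_cons IHc qg big_distrl -big_split /=; apply: eq_bigr => l _.
by rewrite mulrDl mulrAC.
Qed.

Section LocalRing.
Variables (m : A -> Prop) (hloc : local_residue_k m).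

Lemma local_ideal : is_ideal m. Proof. by case: hloc => [[[]]]. Qed.
Lemma local_not1 : ~ m 1. Proof. by case: hloc => [[[]]]. Qed.

Fact residue_exists a : exists c : k, m (a - c%:A). Proof. by case: hloc. Qed.

Definition residue (a : A) : k :=
  proj1_sig (constructive_indefinite_description _ (residue_exists a)).

Lemma residueP a : m (a - (residue a)%:A).
Proof. exact: proj2_sig (constructive_indefinite_description _ (residue_exists a)). Qed.

Lemma residue_uniq a c : m (a - c%:A) -> residue a = c.
Proof.
move=> mac; apply: NNPP => /eqP; rewrite eq_sym -subr_eq0 => nz; apply: local_not1.
have : m (c - residue a)%:A.
  have -> : (c - residue a)%:A = (a - (residue a)%:A) - (a - c%:A) :> A.
    by rewrite scalerBl; ring.
  by apply: (subspaceB (ideal_subspace local_ideal)); [exact: residueP | exact: mac].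
move=> /(subspaceZ (ideal_subspace local_ideal) (c - residue a)^-1).
by rewrite scalerA mulVf // scale1r.
Qed.

Lemma residue_alg c : residue c%:A = c.
Proof. by apply: residue_uniq; rewrite subrr; apply: (ideal0 local_ideal). Qed.

Lemma residue_eq0 a : m a -> residue a = 0.
Proof. by move=> ma; apply: residue_uniq; rewrite scale0r subr0. Qed.

Fact residue_is_zmod_morphism : zmod_morphism residue.
Proof.
move=> a b; apply: residue_uniq.
have -> : a - b - (residue a - residue b)%:A = (a - (residue a)%:A) - (b - (residue b)%:A).
  by rewrite scalerBl; ring.
by apply: (subspaceB (ideal_subspace local_ideal)); apply: residueP.
Qed.

Fact residue_is_monoid_morphism : monoid_morphism residue.
Proof.
split=> [|a b]; first by rewrite -(scale1r (1 : A)) residue_alg.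
apply: residue_uniq.
have -> : a * b - (residue a * residue b)%:A =
    (a - (residue a)%:A) * b + (residue a)%:A * (b - (residue b)%:A).
  by rewrite -[(_ * _)%:A]scalerA -mulr_algr; ring.
by apply: (idealD local_ideal); [apply: (idealMr local_ideal) | apply: (idealMl local_ideal)];
  apply: residueP.
Qed.

HB.instance Definition _ := GRing.isZmodMorphism.Build A k residue residue_is_zmod_morphism.
HB.instance Definition _ := GRing.isMonoidMorphism.Build A k residue residue_is_monoid_morphism.

Lemma residue_unit u : residue u != 0 -> exists v, u * v = 1.
Proof.
move=> /eqP nz; apply: NNPP => noinv; apply: nz; apply: residue_eq0.
have proper_uA : is_proper_ideal (fun x => exists v, x = u * v).
  split; last by case=> v /esym uv1; apply: noinv; exists v.
  split=> [|x y [v ->] [w ->]|a x [v ->]]; first by exists 0; rewrite mulr0.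
    by exists (v + w); rewrite mulrDr.
  by exists (a * v); rewrite mulrCA.
by case: hloc => _ sub_m _; apply: (sub_m _ proper_uA u); exists 1; rewrite mulr1.
Qed.

Lemma det_one_sub_unit p (C : 'M[A]_p) :
  (forall i j, m (C i j)) -> exists v, \det (1%:M - C) * v = 1.
Proof.
move=> mC; apply: residue_unit.
rewrite -det_map_mx map_mxB map_mx1 (_ : map_mx residue C = 0) ?subr0 ?det1 ?oner_neq0 //.
by apply/matrixP => i j; rewrite !mxE residue_eq0.
Qed.

Lemma ideal_det_trick (I : A -> Prop) p (C : 'M[A]_p) (g : 'I_p -> A) : is_ideal I ->
  (forall i j, m (C i j)) -> (forall i, I (g i - \sum_j C i j * g j)) -> forall i, I (g i).
Proof.
move=> hI mC Ig i; pose B := 1%:M - C; pose G : 'M[A]_(p, 1) := \col_i g i.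
have BG i' : (B *m G) i' 0 = g i' - \sum_j C i' j * g j.
  rewrite mxE; under eq_bigr do rewrite !mxE mulrBl; rewrite sumrB; congr (_ - _).
  rewrite (bigD1 i') //= eqxx mul1r big1 ?addr0 // => j.
  by rewrite eq_sym => /negbTE ->; rewrite mul0r.
(* [\adj B *m B = \det B], so [\det B * g i] is a combination of the entries
   of [B *m G], which lie in [I]. *)
have IdetBg : I (\det B * g i).
  have : ((\det B)%:M *m G) i 0 = (\adj B *m (B *m G)) i 0 by rewrite mulmxA mul_adj_mx.
  rewrite mul_scalar_mx !mxE => ->; apply: (subspace_sum (ideal_subspace hI)) => i' _.
  by rewrite BG; apply: idealMl.
have [v detBv] := det_one_sub_unit mC.
by rewrite -[g i]mul1r -detBv mulrAC; apply: idealMr.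
Qed.

Lemma nakayama (I J : A -> Prop) (s : seq A) : is_ideal I ->
  (forall a, J a <-> ideal_gen s a) ->
  (forall a, J a -> exists2 y, ideal_mul J m y & I (a - y)) -> forall a, J a -> I a.
Proof.
move=> hI genJ JIm.
have rel_s (l : 'I_(size s)) : exists c : 'I_(size s) -> A,
    (forall l', m (c l')) /\ I (s`_l - \sum_l' c l' * s`_l').
  have [y Jmy Iy] := JIm _ (proj2 (genJ _) (ideal_gen_nth l)).
  have [c [mc yc]] := ideal_mul_gen local_ideal (fun a => proj1 (genJ a)) Jmy.
  by exists c; rewrite -yc.
have [C hC] := functional_choice _ rel_s.
have Is := ideal_det_trick (C := \matrix_(l, l') C l l') hI.
move=> a /genJ/ideal_genP[g ->]; apply: (subspace_sum (ideal_subspace hI)) => l _.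
apply: (idealMl hI); apply: (Is (fun l => s`_l)) => [i j|i]; rewrite ?mxE.
  by case: (hC i).
by under eq_bigr do rewrite mxE; case: (hC i).
Qed.

Hypothesis hnoeth : noetherian_ring A.

Lemma ideal_pow_sub_of_quot_dim (I : A -> Prop) n : is_ideal I -> ring_quot_dim I n ->
  exists j, forall a, ideal_pow m j a -> I a.
Proof.
move=> hI [w [iw sw]].
have [[j stab]|nostab] := classic (exists j, forall a, ideal_pow m j a ->
    exists2 y, ideal_pow m j.+1 y & I (a - y)).
  have [s genJ] := hnoeth (ideal_pow_ideal m j).
  by exists j; apply: nakayama hI genJ stab.
have [z hz] : exists z : 'I_n.+1 -> A, forall i : 'I_n.+1,
    ideal_pow m i (z i) /\ ~ exists2 y, ideal_pow m i.+1 y & I (z i - y).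
  have step (i : 'I_n.+1) :
      exists a, ideal_pow m i a /\ ~ exists2 y, ideal_pow m i.+1 y & I (a - y).
    apply: NNPP => none; apply: nostab; exists i => a ma; apply: NNPP => nIa.
    by apply: none; exists a.
  exact: functional_choice _ step.
have iz := indep_mod_filtration (ideal_subspace hI) (fun i => ideal_subspace (ideal_pow_ideal m i))
  (@ideal_pow_le m) hz.
by have := indep_mod_card_le (ideal_subspace hI) sw iz; rewrite ltnn.
Qed.

Lemma ideal_pow_spans j : exists p (f : 'I_p -> A), spans_mod (ideal_pow m j) f.
Proof.
elim: j => [|j [p [f sf]]]; first by exists 0%N, (fun _ => 0) => x; exists (fun _ => 0).
have [s genJ] := hnoeth (ideal_pow_ideal m j).
exists (p + size s)%N; eexists.
apply: (spans_mod_cat (g := fun l => s`_l) sf) => x /genJ/ideal_genP[g ->].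
exists (fun l => residue (g l)); rewrite -sumrB.
apply: (subspace_sum (ideal_subspace (ideal_pow_ideal m j.+1))) => l _.
rewrite -mulr_algr [g l * _]mulrC -mulrBr; apply: ideal_mul_mem; last exact: residueP.
exact/genJ/ideal_gen_nth.
Qed.

Lemma ideal_pow_quot_dim j : exists e, ring_quot_dim (ideal_pow m j) e.
Proof.
have [p [f /(basis_mod_exists (ideal_subspace (ideal_pow_ideal m j)))]] := ideal_pow_spans j.
by case=> e [v bv]; exists e, v.
Qed.
End LocalRing.

End Ideals.

(** * Quotients of modules *)

Lemma big_mxvec_index (V : nmodType) e d (F : 'I_(e * d) -> V) :
  \sum_l F l = \sum_b \sum_i F (mxvec_index b i).
Proof.
rewrite pair_bigA /= (reindex (uncurry (@mxvec_index e d))) /=; last first.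
  by have [g gK Kg] := curry_mxvec_bij e d; exists g => l _; [apply: gK | apply: Kg].
by apply: eq_bigr => -[].
Qed.

Section Modules.
Variables (k : fieldType) (A : comAlgType k) (M : lmodType A).

(* [M] as a [k]-vector space by restriction of scalars, the structure in which
   [tensor_quot_dim] measures dimensions. *)
Definition kspace : Type := M.
HB.instance Definition _ := GRing.Zmodule.on kspace.

Definition kscale (c : k) (x : kspace) : kspace := c%:A *: (x : M).

Fact kscaleA a b x : kscale a (kscale b x) = kscale (a * b) x.
Proof. by rewrite /kscale scalerA mulr_algl scalerA. Qed.
Fact kscale1 : left_id 1 kscale. Proof. by move=> x; rewrite /kscale !scale1r. Qed.
Fact kscaleDr : right_distributive kscale +%R. Proof. by move=> a x y; apply: scalerDr. Qed.
Fact kscaleDl x : {morph kscale^~ x : a b / a + b}.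
Proof. by move=> a b; rewrite /kscale !scalerDl. Qed.

HB.instance Definition _ :=
  GRing.Zmodule_isLmodule.Build k kspace kscaleA kscale1 kscaleDr kscaleDl.

Local Notation kIM I := (@submod_mul _ _ M I : kspace -> Prop).

Lemma tensor_quot_dimE (I : A -> Prop) d : tensor_quot_dim M I d <->
  exists v : 'I_d -> kspace, indep_mod (kIM I) v /\ spans_mod (kIM I) v.
Proof. by []. Qed.

Lemma submod_mul_mem (I : A -> Prop) a (x : M) : I a -> submod_mul I (a *: x).
Proof. by move=> Ia; exists [:: (a, x)]; rewrite big_seq1; split => // p /[!inE] /eqP ->. Qed.

Lemma submod_mul_sub (I J : A -> Prop) (x : M) :
  (forall a, I a -> J a) -> submod_mul I x -> submod_mul J x.
Proof. by move=> IJ [t [It ->]]; exists t; split => // p /It /IJ. Qed.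

Lemma submod_mul_scale (I J : A -> Prop) a (x : M) :
  (forall b, I b -> J (a * b)) -> submod_mul I x -> submod_mul J (a *: x).
Proof.
move=> IJ [t [It ->]]; exists [seq (a * p.1, p.2) | p <- t]; split.
  by move=> _ /mapP[p pt ->]; apply/IJ/It.
by rewrite big_map scaler_sumr; apply: eq_bigr => p _; rewrite scalerA.
Qed.

Lemma submod_mulD (I : A -> Prop) (x y : M) :
  submod_mul I x -> submod_mul I y -> submod_mul I (x + y).
Proof.
move=> [t1 [h1 ->]] [t2 [h2 ->]]; exists (t1 ++ t2); rewrite big_cat; split => // p.
by rewrite mem_cat => /orP[]; [apply: h1 | apply: h2].
Qed.

Lemma submod_mul_sum (I : A -> Prop) (T : Type) (r : seq T) (P : pred T) (F : T -> M) :
  (forall i, P i -> submod_mul I (F i)) -> submod_mul I (\sum_(i <- r | P i) F i).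
Proof.
move=> IF; apply: big_ind => //; last exact: submod_mulD.
by exists [::]; rewrite big_nil.
Qed.

Lemma submod_mul_subspace (I : A -> Prop) : is_ideal I -> is_subspace (kIM I).
Proof.
move=> hI; split=> [|x y|c x]; last by apply: submod_mul_scale => b; apply: idealMl.
  by exists [::]; rewrite big_nil.
exact: submod_mulD.
Qed.

Definition gen_mod (I : A -> Prop) d (x : 'I_d -> M) : Prop :=
  forall y : M, exists a : 'I_d -> A, submod_mul I (y - \sum_i a i *: x i).

Definition free_mod (I : A -> Prop) d (x : 'I_d -> M) : Prop :=
  forall a : 'I_d -> A, submod_mul I (\sum_i a i *: x i) -> forall i, I (a i).

Lemma sum_scale_sub_combination d (x : 'I_d -> M) (t : seq (A * M)) (b : M -> 'I_d -> A) :
  \sum_(q <- t) q.1 *: (q.2 - \sum_i b q.2 i *: x i) =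
  \sum_(q <- t) q.1 *: q.2 - \sum_i (\sum_(q <- t) q.1 * b q.2 i) *: x i.
Proof.
under [X in _ - X]eq_bigr do rewrite scaler_suml.
rewrite exchange_big -sumrB; apply: eq_bigr => q _.
by rewrite scalerBr scaler_sumr; congr (_ - _); apply: eq_bigr => i _; rewrite scalerA.
Qed.

Lemma gen_mod_sub (I J : A -> Prop) d (x : 'I_d -> M) :
  (forall a, I a -> J a) -> gen_mod I x -> gen_mod J x.
Proof. by move=> IJ gI y; have [a Ia] := gI y; exists a; apply: submod_mul_sub Ia. Qed.

Lemma gen_mod_mul (I J : A -> Prop) d (x : 'I_d -> M) :
  gen_mod I x -> gen_mod J x -> gen_mod (ideal_mul I J) x.
Proof.
move=> gI gJ y; have [a [t [It yt]]] := gI y.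
have [b hb] := functional_choice _ gJ.
exists (fun i => a i + \sum_(q <- t) q.1 * b q.2 i).
under eq_bigr do rewrite scalerDl; rewrite big_split opprD addrA yt.
rewrite -sum_scale_sub_combination big_seq.
apply: submod_mul_sum => q qt; apply: submod_mul_scale (hb q.2) => c Jc.
exact: ideal_mul_mem (It q qt) Jc.
Qed.

Lemma gen_mod_pow (m : A -> Prop) d (x : 'I_d -> M) :
  spans_mod (kIM m) (x : 'I_d -> kspace) -> forall j, gen_mod (ideal_pow m j) x.
Proof.
move=> sx; have gm : gen_mod m x by move=> y; have [c mc] := sx y; exists (fun i => (c i)%:A).
elim=> [|j IH]; last exact: gen_mod_mul IH gm.
by move=> y; exists (fun _ => 0); rewrite -[_ - _]scale1r; apply: submod_mul_mem.
Qed.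

Definition prod_family e d (u : 'I_e -> A) (x : 'I_d -> M) : 'I_(e * d) -> kspace :=
  fun l => mxvec (\matrix_(b, i) (u b *: x i : kspace)) 0 l.

Lemma sum_prod_family e d (u : 'I_e -> A) (x : 'I_d -> M) (c : 'I_(e * d) -> k) :
  \sum_l c l *: prod_family u x l = \sum_i (\sum_b c (mxvec_index b i) *: u b) *: x i :> M.
Proof.
rewrite big_mxvec_index exchange_big /=; apply: eq_bigr => i _.
rewrite scaler_suml; apply: eq_bigr => b _.
by rewrite /prod_family mxvecE mxE -mulr_algl -scalerA.
Qed.

Lemma spans_mod_prod_family (I : A -> Prop) e d (u : 'I_e -> A) (x : 'I_d -> M) :
  spans_mod I u -> gen_mod I x -> spans_mod (kIM I) (prod_family u x).
Proof.
move=> su gx y; have [a Ia] := gx y.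
have [G hG] := functional_choice _ (fun i => su (a i)).
exists (fun l => mxvec (\matrix_(b, i) G i b) 0 l); rewrite sum_prod_family.
under eq_bigr do under eq_bigr do rewrite mxvecE mxE.
have -> : y - \sum_i (\sum_b G i b *: u b) *: x i =
    (y - \sum_i a i *: x i) + \sum_i (a i - \sum_b G i b *: u b) *: x i.
  by under [X in _ = _ + X]eq_bigr do rewrite scalerBl; rewrite sumrB addrA subrK.
by apply: submod_mulD Ia _; apply: submod_mul_sum => i _; apply: submod_mul_mem.
Qed.

Lemma free_mod_of_indep_prod_family (I : A -> Prop) e d (u : 'I_e -> A) (x : 'I_d -> M) :
  is_ideal I -> spans_mod I u -> indep_mod (kIM I) (prod_family u x) -> free_mod I x.
Proof.
move=> hI su iux a Ia.
have [G hG] := functional_choice _ (fun i => su (a i)).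
have G0 i b : G i b = 0.
  have := iux (fun l => mxvec (\matrix_(b0, i0) G i0 b0) 0 l) _ (mxvec_index b i).
  rewrite mxvecE mxE; apply; rewrite sum_prod_family.
  under eq_bigr do under eq_bigr do rewrite mxvecE mxE.
  have -> : \sum_i (\sum_b G i b *: u b) *: x i =
      \sum_i a i *: x i - \sum_i (a i - \sum_b G i b *: u b) *: x i.
    by under [X in _ - X]eq_bigr do rewrite scalerBl; rewrite sumrB opprB addrC subrK.
  apply: (subspaceB (submod_mul_subspace hI)) Ia _.
  by apply: submod_mul_sum => i0 _; apply: submod_mul_mem.
by move=> i; have := hG i; rewrite big1 ?subr0 // => b _; rewrite G0 scale0r.
Qed.

Lemma free_mod_sup (I J : A -> Prop) d (x : 'I_d -> M) : is_ideal I -> is_ideal J ->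
  (forall a, J a -> I a) -> gen_mod J x -> free_mod J x -> free_mod I x.
Proof.
move=> hI hJ JI gx fx a [t [It eq_at]]; have [b hb] := functional_choice _ gx.
have Jr : forall i, J (a i - \sum_(q <- t) q.1 * b q.2 i).
  apply: fx; under eq_bigr do rewrite scalerBl; rewrite sumrB eq_at.
  rewrite -sum_scale_sub_combination; apply: submod_mul_sum => q _.
  by apply: submod_mul_scale (hb q.2) => c; apply: idealMl.
move=> i; rewrite -(subrK (\sum_(q <- t) q.1 * b q.2 i) (a i)); apply: idealD => //.
  exact/JI/Jr.
rewrite big_seq; apply: (subspace_sum (ideal_subspace hI)) => q qt.
by apply: (idealMr hI); apply: It.
Qed.

Lemma indep_prod_family_of_free (I : A -> Prop) e d (u : 'I_e -> A) (x : 'I_d -> M) :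
  free_mod I x -> indep_mod I u -> indep_mod (kIM I) (prod_family u x).
Proof.
move=> fx iu c; rewrite sum_prod_family => /fx Ic l.
by case/mxvec_indexP: l => b i; apply: (iu _ (Ic i)).
Qed.

Lemma tensor_quot_dim0 (I : A -> Prop) : ring_quot_dim I 0 -> tensor_quot_dim M I 0.
Proof.
case=> v [_ /(_ 1) [c]]; rewrite big_ord0 subr0 => I1.
exists (fun _ => 0); split=> [c' _ []//|y]; exists (fun _ => 0).
by rewrite big_ord0 subr0 -[y]scale1r; apply: submod_mul_mem.
Qed.

Lemma tensor_quot_dim_mul_sup (I J : A -> Prop) n e d (x : 'I_d -> M) :
  is_ideal I -> is_ideal J -> (forall a, J a -> I a) -> gen_mod J x ->
  ring_quot_dim J e -> ring_quot_dim I n -> tensor_quot_dim M J (e * d) ->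
  tensor_quot_dim M I (n * d).
Proof.
move=> hI hJ JI gJ [u [iu su]] [v [iv sv]] /tensor_quot_dimE[w [iw sw]].
have free_J : free_mod J x.
  apply: (free_mod_of_indep_prod_family hJ su).
  exact: (indep_mod_of_spans_mod (submod_mul_subspace hJ) iw (spans_mod_prod_family su gJ)).
apply/tensor_quot_dimE; exists (prod_family v x); split.
  exact: indep_prod_family_of_free (free_mod_sup hI hJ JI gJ free_J) iv.
exact: spans_mod_prod_family sv (gen_mod_sub JI gJ).
Qed.

End Modules.

Theorem proposition4 (k : closedFieldType) (A : comAlgType k)
  (m : A -> Prop) (M : lmodType A) :
  noetherian_ring A -> local_residue_k m -> mod_finitely_generated M ->
  forall d : nat, tensor_quot_dim M m d ->
  ((forall n : nat, (0 < n)%N -> forall I : A -> Prop, colength I n ->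
      tensor_quot_dim M I (n * d))
   <->
   (forall n : nat, (0 < n)%N -> forall e : nat, ring_quot_dim (ideal_pow m n) e ->
      tensor_quot_dim M (ideal_pow m n) (e * d))).
Proof.
move=> hnoeth hloc _ d [x [_ sx]]; split=> [colen n _ [|e] dim_e|pow n _ I [hI dim_n]].
- exact: tensor_quot_dim0 dim_e.
- exact: colen e.+1 isT (ideal_pow m n) (conj (ideal_pow_ideal m n) dim_e).
have [j mjI] := ideal_pow_sub_of_quot_dim hloc hnoeth hI dim_n.
have [e dim_e] := ideal_pow_quot_dim hloc hnoeth j.+1.
apply: (tensor_quot_dim_mul_sup hI (ideal_pow_ideal m j.+1) _ (gen_mod_pow sx j.+1) dim_e dim_n).
  by move=> a /(ideal_pow_le (leqnSn j)) /mjI.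
exact: pow j.+1 isT e dim_e.
Qed.
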